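(* For every integer $n\ge 3$ with $n\equiv 2\pmod 4$, $\gamma_t(C_n\times C_4)\le\gamma_p(C_n\times C_4)\le n+2$.
   Context: All graphs are finite, simple and undirected. $C_n$ denotes the cycle of order $n$ and $G\times H$ the Cartesian product of graphs. For a graph $G$ without isolated vertices: a set $D\subseteq V(G)$ is a total dominating set if every vertex of $G$ (including those in $D$) has a neighbour in $D$; $\gamma_t(G)$ is the minimum size of a total dominating set. A set $D\subseteq V(G)$ is a paired dominating set if every vertex outside $D$ has a neighbour in $D$ and the induced subgraph $G[D]$ has a perfect matching; $\gamma_p(G)$ is the minimum size of a paired dominating set. *)

(* Simple graphs are symmetric irreflexive relations on a finType. *)
From mathcomp Require Import all_boot.
Set Implicit Arguments. Unset Strict Implicit. Unset Printing Implicit Defensive.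

Definition cycle_rel (n : nat) : rel 'I_n :=
  fun i j => (val j == (val i).+1 %% n) || (val i == (val j).+1 %% n).

Arguments cycle_rel n : clear implicits.

Definition cart_rel (T1 T2 : finType) (e1 : rel T1) (e2 : rel T2) : rel (T1 * T2) :=
  fun u v => ((u.1 == v.1) && e2 u.2 v.2) || ((u.2 == v.2) && e1 u.1 v.1).

Definition total_dominating (T : finType) (e : rel T) (D : {set T}) : bool :=
  [forall v, [exists u in D, e v u]].

Definition perfect_matching_of (T : finType) (e : rel T) (D : {set T})
    (M : {set {set T}}) : bool :=
  [&& [forall m in M, [exists x, [exists y,
          [&& x != y, e x y & m == [set x; y]]]]],
      trivIset M & cover M == D].

Definition paired_dominating (T : finType) (e : rel T) (D : {set T}) : bool :=
  [forall v, (v \notin D) ==> [exists u in D, e v u]] &&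
  [exists M : {set {set T}}, perfect_matching_of e D M].

(* Minimum sizes (meaningful when such sets exist, e.g. no isolated vertices). *)
Definition gamma_t (T : finType) (e : rel T) : nat :=
  \big[minn/#|T|]_(D : {set T} | total_dominating e D) #|D|.

Definition gamma_p (T : finType) (e : rel T) : nat :=
  \big[minn/#|T|]_(D : {set T} | paired_dominating e D) #|D|.

From mathcomp Require Import all_boot order zify.
Set Implicit Arguments. Unset Strict Implicit. Unset Printing Implicit Defensive.
Import Order.TTheory.

(* Put a vertical domino {(i, r), (i, r + 1)} in every even column i of C_n x C_4 and in
   the last column n - 1: on rows {2, 3} if i = 2 (mod 4) or i = n - 1, on rows {0, 1}
   otherwise.  Either half of C_4 totally dominates C_4, so a domino dominates its own
   column.  For even n, the neighbours i - 1 and i + 1 of an odd column i < n - 1 are even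
   and exactly one of them is 2 (mod 4), so their dominoes sit at opposite heights and
   dominate column i horizontally.  The n/2 + 1 dominoes perfectly match the n + 2
   vertices they cover, and a paired dominating set is totally dominating. *)

Lemma gamma_p_le_card (T : finType) (e : rel T) (D : {set T}) :
  paired_dominating e D -> gamma_p e <= #|D|.
Proof. by move=> /(bigmin_le_cond #|T| (fun E : {set T} => #|E|)). Qed.

Lemma perfect_matching_partner (T : finType) (e : rel T) (D : {set T})
    (M : {set {set T}}) (x : T) :
  symmetric e -> perfect_matching_of e D M -> x \in D -> exists2 y, y \in D & e x y.
Proof.
move=> e_sym /and3P[/forall_inP M_edges _ /eqP covD] xD.
have /bigcupP[m mM xm] : x \in cover M by rewrite covD.
have /existsP[a /existsP[b /and3P[_ e_ab /eqP def_m]]] := M_edges m mM.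
have m_sub_D : m \subset D by rewrite -covD bigcup_sup.
have aD : a \in D by rewrite (subsetP m_sub_D) // def_m !inE eqxx.
have bD : b \in D by rewrite (subsetP m_sub_D) // def_m !inE eqxx orbT.
by move: xm; rewrite def_m !inE => /orP[]/eqP->; [exists b | exists a; rewrite // e_sym].
Qed.

Lemma paired_dominating_total (T : finType) (e : rel T) (D : {set T}) :
  symmetric e -> paired_dominating e D -> total_dominating e D.
Proof.
move=> e_sym /andP[/forallP domD /existsP[M matchD]]; apply/forallP => v.
have [vD | /(implyP (domD v))//] := boolP (v \in D).
by have [u uD e_vu] := perfect_matching_partner e_sym matchD vD; apply/exists_inP; exists u.
Qed.

Lemma gamma_t_le_gamma_p (T : finType) (e : rel T) :
  symmetric e -> gamma_t e <= gamma_p e.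
Proof.
move=> /paired_dominating_total e_pt.
by move: (sub_bigmin (x0 := #|T|) (index_enum _) (fun E : {set T} => #|E|) e_pt).
Qed.

Section DisjointEdges.

Variables (T I : finType) (x y : I -> T) (col : T -> I).
Hypotheses (x_neq_y : forall i, x i != y i) (xK : cancel x col) (yK : cancel y col).

Let edge i := [set x i; y i].

Lemma col_edge i z : z \in edge i -> col z = i.
Proof. by rewrite !inE => /orP[]/eqP->. Qed.

Lemma trivIset_edges (S : {set I}) : trivIset (edge @: S).
Proof.
apply/trivIsetP => _ _ /imsetP[i _ ->] /imsetP[k _ ->] neq_ik.
apply/pred0P => z /=; apply/negbTE/andP => -[/col_edge zi /col_edge zk].
by rewrite -zi -zk eqxx in neq_ik.
Qed.

Lemma perfect_matching_edges (e : rel T) (S : {set I}) :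
  (forall i, e (x i) (y i)) ->
  perfect_matching_of e (\bigcup_(i in S) edge i) (edge @: S).
Proof.
move=> e_xy; apply/and3P; split; rewrite ?trivIset_edges ?cover_imset //.
apply/forall_inP => _ /imsetP[i _ ->]; apply/existsP; exists (x i).
by apply/existsP; exists (y i); rewrite x_neq_y e_xy eqxx.
Qed.

Lemma card_bigcup_edges (S : {set I}) : #|\bigcup_(i in S) edge i| = 2 * #|S|.
Proof.
have edge_inj : injective edge.
  by move=> i k eq_ik; rewrite -(col_edge (_ : x i \in edge k)) // -eq_ik !inE eqxx.
rewrite mulnC -(card_imset _ edge_inj); apply: card_uniform_partition.
  by move=> _ /imsetP[i _ ->]; rewrite cards2 x_neq_y.
apply/and3P; split; rewrite ?trivIset_edges ?cover_imset //.
by apply/imsetP => -[i _ /esym/setP/(_ (x i))]; rewrite !inE eqxx.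
Qed.

End DisjointEdges.

Lemma cart_rel_sym (T1 T2 : finType) (e1 : rel T1) (e2 : rel T2) :
  symmetric e1 -> symmetric e2 -> symmetric (cart_rel e1 e2).
Proof. by move=> s1 s2 u v; rewrite /cart_rel (eq_sym u.1) (eq_sym u.2) s1 s2. Qed.

Lemma cart_rel_vert (T1 T2 : finType) (e1 : rel T1) (e2 : rel T2) a j k :
  e2 j k -> cart_rel e1 e2 (a, j) (a, k).
Proof. by move=> e_jk; rewrite /cart_rel /= eqxx e_jk. Qed.

Lemma cart_rel_horiz (T1 T2 : finType) (e1 : rel T1) (e2 : rel T2) i k j :
  e1 i k -> cart_rel e1 e2 (i, j) (k, j).
Proof. by move=> e_ik; rewrite /cart_rel /= eqxx e_ik orbT. Qed.

Lemma cycle_rel_sym n : symmetric (cycle_rel n).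
Proof. by move=> i j; rewrite /cycle_rel orbC. Qed.

Lemma cycle_rel_ordS n (i : 'I_n) : cycle_rel n i (ordS i).
Proof. by rewrite /cycle_rel eqxx. Qed.

Lemma cycle_rel_ord_pred n (i : 'I_n) : cycle_rel n i (ord_pred i).
Proof.
by rewrite /cycle_rel; move: (congr1 val (ord_predK i)) => /= ->; rewrite eqxx orbT.
Qed.

Definition c4_lo (b : bool) : 'I_4 := inord (2 * b).
Definition c4_hi (b : bool) : 'I_4 := inord (2 * b).+1.
Definition c4_half (b : bool) : {set 'I_4} := [set c4_lo b; c4_hi b].

Lemma cycle_rel_c4_lo_hi b : cycle_rel 4 (c4_lo b) (c4_hi b).
Proof. by case: b; rewrite /cycle_rel /= !inordK. Qed.

Lemma c4_lo_neq_hi b : c4_lo b != c4_hi b.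
Proof. by case: b; rewrite -val_eqE /= !inordK. Qed.

Lemma c4_halfN b : c4_half (~~ b) = ~: c4_half b.
Proof.
by apply/setP => j; rewrite !inE -!val_eqE /= !inordK; case: b; case: j => -[|[|[|[|]]]].
Qed.

Lemma c4_half_total_dominating b : total_dominating (cycle_rel 4) (c4_half b).
Proof.
apply/forallP => j; apply/exists_inP.
have : cycle_rel 4 j (c4_lo b) || cycle_rel 4 j (c4_hi b).
  by case: b; rewrite /cycle_rel /= !inordK //; case: j => -[|[|[|[|]]]].
by case/orP => ?; [exists (c4_lo b) | exists (c4_hi b)]; rewrite // !inE eqxx ?orbT.
Qed.

Local Notation grid n := (cart_rel (cycle_rel n) (cycle_rel 4)).

Definition domino_cols n : {set 'I_n} := [set i : 'I_n | ~~ odd i || (i == n.-1 :> nat)].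
Definition upper_domino n (i : 'I_n) : bool := (i %% 4 == 2) || (i == n.-1 :> nat).
Definition domino n (i : 'I_n) : {set 'I_n * 'I_4} :=
  [set (i, c4_lo (upper_domino i)); (i, c4_hi (upper_domino i))].
Definition domino_set n : {set 'I_n * 'I_4} := \bigcup_(i in domino_cols n) domino i.

Lemma mem_domino_set n (i : 'I_n) (j : 'I_4) :
  ((i, j) \in domino_set n) = (i \in domino_cols n) && (j \in c4_half (upper_domino i)).
Proof.
apply/bigcupP/idP => [[k kP] | /andP[iP ji]]; rewrite /domino.
  move: kP; rewrite /c4_half !inE !xpair_eqE => kP.
  by case/orP=> /andP[/eqP-> /eqP->]; rewrite kP eqxx ?orbT.
by exists i; move: ji; rewrite // /c4_half !inE !xpair_eqE eqxx.
Qed.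

Lemma free_col_neighbours n (i : 'I_n) : ~~ odd n -> i \notin domino_cols n ->
  [/\ ord_pred i \in domino_cols n, ordS i \in domino_cols n
    & upper_domino (ordS i) = ~~ upper_domino (ord_pred i)].
Proof.
move=> n_even; rewrite inE negb_or negbK => /andP[i_odd /eqP i_last].
have lt_in := ltn_ord i.
have val_S : ordS i = i.+1 :> nat by rewrite /= modn_small //; lia.
have val_P : ord_pred i = i.-1 :> nat.
  move: i_odd lt_in; rewrite /=; case: (nat_of_ord i) => [|k] //= _ lt_kn.
  by rewrite modnDr modn_small //; lia.
rewrite !inE /upper_domino val_S val_P.
have -> : (i.+1 == n.-1) = false by apply/eqP; lia.
have -> : (i.-1 == n.-1) = false by apply/eqP; lia.
by split; [lia | lia | case: eqP; case: eqP => //=; lia].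
Qed.

Lemma sum_even_ord m : \sum_(i < m) ~~ odd i = uphalf m.
Proof.
elim: m => [|m IHm]; first by rewrite big_ord0.
by rewrite big_ord_recr /= IHm uphalf_half; case: (odd m); rewrite /= ?addn0 ?addn1.
Qed.

Lemma card_domino_cols n : 0 < n -> #|domino_cols n| = n./2.+1.
Proof.
case: n => // m _.
rewrite -sum1dep_card big_mkcond big_ord_recr /= eqxx orbT addn1 -sum_even_ord.
congr _.+1; apply: eq_bigr => i _.
by rewrite (ltn_eqF (ltn_ord i)) orbF; case: (odd i).
Qed.

Lemma domino_set_total_dominating n :
  ~~ odd n -> total_dominating (grid n) (domino_set n).
Proof.
move=> n_even; apply/forallP => -[i j]; apply/exists_inP.
have [iP | iNP] := boolP (i \in domino_cols n).
  have /exists_inP[k k_half e_jk] := forallP (c4_half_total_dominating (upper_domino i)) j.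
  by exists (i, k); rewrite ?mem_domino_set ?iP // cart_rel_vert.
have [predP succP upper_succ] := free_col_neighbours n_even iNP.
have [j_half | j_nhalf] := boolP (j \in c4_half (upper_domino (ord_pred i))).
  exists (ord_pred i, j); rewrite ?cart_rel_horiz ?cycle_rel_ord_pred //.
  by rewrite mem_domino_set predP.
exists (ordS i, j); rewrite ?cart_rel_horiz ?cycle_rel_ordS //.
by rewrite mem_domino_set succP upper_succ c4_halfN inE.
Qed.

Lemma domino_edge n (i : 'I_n) :
  grid n (i, c4_lo (upper_domino i)) (i, c4_hi (upper_domino i)).
Proof. exact/cart_rel_vert/cycle_rel_c4_lo_hi. Qed.

Lemma domino_neq n (i : 'I_n) :
  (i, c4_lo (upper_domino i)) != (i, c4_hi (upper_domino i)).
Proof. by rewrite xpair_eqE (negbTE (c4_lo_neq_hi _)) andbF. Qed.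

Lemma domino_set_paired_dominating n :
  ~~ odd n -> paired_dominating (grid n) (domino_set n).
Proof.
move=> /domino_set_total_dominating /forallP domD; apply/andP; split.
  by apply/forallP => v; apply/implyP => _; apply: domD.
apply/existsP; exists (@domino n @: domino_cols n).
exact: (perfect_matching_edges (@domino_neq n) (col := fst)) (@domino_edge n).
Qed.

Lemma card_domino_set n : 0 < n -> #|domino_set n| = (n./2.+1).*2.
Proof.
move=> n_gt0; rewrite -card_domino_cols // -mul2n.
exact: (card_bigcup_edges (@domino_neq n) (col := fst)).
Qed.

Theorem lemma4p2 (n : nat) (hn : 3 <= n) (hmod : n %% 4 = 2) :
  gamma_t (cart_rel (cycle_rel n) (cycle_rel 4)) <=
    gamma_p (cart_rel (cycle_rel n) (cycle_rel 4)) <= n + 2.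
Proof.
have n_even : ~~ odd n by lia.
have n_gt0 : 0 < n by apply: leq_trans hn.
apply/andP; split.
  exact/gamma_t_le_gamma_p/cart_rel_sym/cycle_rel_sym/cycle_rel_sym.
have -> : n + 2 = #|domino_set n| by rewrite card_domino_set //; lia.
exact/gamma_p_le_card/domino_set_paired_dominating.
Qed.
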